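(* Let $f:[0,\infty)\to\mathbb{R}$ be four times differentiable with $f(0)\ge0$, $f'(0)\ge0$, and $f^{(4)}(u)>0$ for all $u>0$. Then the function $u\mapsto f(u)/u^2$ is strictly convex on $(0,\infty)$. *)

From Stdlib Require Import Reals.
From Coquelicot Require Import Coquelicot.
Open Scope R_scope.

(* [has_deriv_nonneg f f'] : f' is the derivative of f relative to the domain
   [0, +oo): for every x >= 0, (f y - f x)/(y - x) -> f' x as y -> x with
   y in [0,+oo), y <> x.  At x = 0 this is the one-sided (right) derivative,
   at x > 0 it is the usual derivative.  Values of f on (-oo,0) are irrelevant. *)
Definition has_deriv_nonneg (f f' : R -> R) : Prop :=
  forall x, 0 <= x ->
    filterlim (fun y => (f y - f x) / (y - x))
      (within (fun y => 0 <= y /\ y <> x) (locally x))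
      (locally (f' x)).

Definition strictly_convex_on (D : R -> Prop) (g : R -> R) : Prop :=
  forall x y t, D x -> D y -> x <> y -> 0 < t < 1 ->
    g (t * x + (1 - t) * y) < t * g x + (1 - t) * g y.

From Stdlib Require Import Reals Lra.
From Coquelicot Require Import Coquelicot.
Open Scope R_scope.

(* With g u := f u / u^2 one computes g'' = N / u^4, where
   N u := u^2 f'' u - 4 u f' u + 6 f u, N' = M with M u := u^2 f''' u - 2 u f'' u + 2 f' u,
   and M' u = u^2 f'''' u > 0.  Hence M increases strictly on (0, oo) from M 0 = 2 f'(0) >= 0,
   so M > 0 there; then N increases strictly from N 0 = 6 f(0) >= 0, so N > 0; so g'' > 0. *)

Lemma has_deriv_nonneg_derivable_pt_lim (p p' : R -> R) (x : R) :
  has_deriv_nonneg p p' -> 0 < x -> derivable_pt_lim p x (p' x).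
Proof.
  intros Hp Hx eps Heps.
  destruct (Hp x (Rlt_le _ _ Hx) _ (locally_ball (p' x) (mkposreal _ Heps))) as [d Hd].
  assert (Hdx : 0 < Rmin d x) by (apply Rmin_pos; [apply cond_pos | lra]).
  exists (mkposreal _ Hdx); intros h Hh0 Hh; simpl in Hh.
  assert (Hhd := Rlt_le_trans _ _ _ Hh (Rmin_l d x)).
  assert (Hhx := Rabs_def2 _ _ (Rlt_le_trans _ _ _ Hh (Rmin_r d x))).
  assert (Hball : ball x d (x + h)).
  { change (Rabs (x + h - x) < d); now replace (x + h - x) with h by ring. }
  assert (Hdom : 0 <= x + h /\ x + h <> x) by (split; [lra | intros E; apply Hh0; lra]).
  specialize (Hd _ Hball Hdom).
  change (Rabs ((p (x + h) - p x) / (x + h - x) - p' x) < eps) in Hd.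
  now replace (x + h - x) with h in Hd by ring.
Qed.

Lemma has_deriv_nonneg_is_derive (p p' : R -> R) (x : R) :
  has_deriv_nonneg p p' -> 0 < x -> is_derive p x (p' x).
Proof.
  intros Hp Hx; apply is_derive_Reals; now apply has_deriv_nonneg_derivable_pt_lim.
Qed.

Lemma filterlim_Rplus {T : Type} (F : (T -> Prop) -> Prop) {FF : Filter F}
  (p q : T -> R) (a b : R) :
  filterlim p F (locally a) -> filterlim q F (locally b) ->
  filterlim (fun x => p x + q x) F (locally (a + b)).
Proof. intros Hp Hq; eapply filterlim_comp_2; eauto; apply (filterlim_plus a b). Qed.

Lemma filterlim_Rmult {T : Type} (F : (T -> Prop) -> Prop) {FF : Filter F}
  (p q : T -> R) (a b : R) :
  filterlim p F (locally a) -> filterlim q F (locally b) ->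
  filterlim (fun x => p x * q x) F (locally (a * b)).
Proof. intros Hp Hq; eapply filterlim_comp_2; eauto; apply (filterlim_mult a b). Qed.

Lemma filterlim_id_at_right (a : R) : filterlim (fun y => y) (at_right a) (locally a).
Proof.
  apply (filterlim_filter_le_1 (G := at_right a) (F := locally a));
    [apply filter_le_within | apply filterlim_id].
Qed.

Lemma has_deriv_nonneg_right_cont (p p' : R -> R) :
  has_deriv_nonneg p p' -> filterlim p (at_right 0) (locally (p 0)).
Proof.
  intros Hp.
  assert (Hq : filterlim (fun y => (p y - p 0) / (y - 0)) (at_right 0) (locally (p' 0))).
  { apply (filterlim_filter_le_1 _ (F := within (fun y => 0 <= y /\ y <> 0) (locally 0))).
    - intros P [d Hd]; exists d; intros y Hy Hy0; apply Hd; [exact Hy | lra].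
    - exact (Hp 0 (Rle_refl 0)). }
  assert (Hlim : filterlim (fun y => p 0 + y * ((p y - p 0) / (y - 0))) (at_right 0)
                   (locally (p 0 + 0 * p' 0))).
  { apply (filterlim_Rplus (at_right 0)); [apply filterlim_const |].
    apply (filterlim_Rmult (at_right 0)); [apply filterlim_id_at_right | exact Hq]. }
  rewrite Rmult_0_l, Rplus_0_r in Hlim.
  eapply filterlim_within_ext; [| exact Hlim].
  intros y Hy; simpl; field; lra.
Qed.

Lemma strict_incr_of_deriv_pos (a : R) (p p' : R -> R) :
  (forall x, a < x -> derivable_pt_lim p x (p' x)) -> (forall x, a < x -> 0 < p' x) ->
  forall x y, a < x -> x < y -> p x < p y.
Proof.
  intros Hd Hpos x y Hx Hxy.
  destruct (MVT_cor2 p p' x y Hxy) as [c [Hmvt Hc]].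
  { intros c Hc; apply Hd; lra. }
  assert (0 < p' c * (y - x)) by (apply Rmult_lt_0_compat; [apply Hpos |]; lra).
  lra.
Qed.

Lemma right_lim_lt_of_strict_incr (a l : R) (p : R -> R) :
  filterlim p (at_right a) (locally l) ->
  (forall x y, a < x -> x < y -> p x < p y) -> forall x, a < x -> l < p x.
Proof.
  intros Hlim Hincr x Hx.
  assert (Hmid : l <= p ((a + x) / 2)).
  { apply (filterlim_le (F := at_right a) p (fun _ => p ((a + x) / 2)) l (p ((a + x) / 2))).
    - exists (mkposreal ((x - a) / 2) ltac:(lra)); intros y Hy Hay.
      change (Rabs (y - a) < (x - a) / 2) in Hy; apply Rabs_def2 in Hy.
      apply Rlt_le, Hincr; lra.
    - exact Hlim.
    - apply filterlim_const. }
  assert (p ((a + x) / 2) < p x) by (apply Hincr; lra).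
  lra.
Qed.

Lemma pos_of_right_lim_deriv_pos (l : R) (p p' : R -> R) :
  filterlim p (at_right 0) (locally l) -> 0 <= l ->
  (forall x, 0 < x -> derivable_pt_lim p x (p' x)) -> (forall x, 0 < x -> 0 < p' x) ->
  forall x, 0 < x -> 0 < p x.
Proof.
  intros Hlim Hl Hd Hpos x Hx.
  assert (l < p x) by (apply (right_lim_lt_of_strict_incr 0 l p Hlim); auto;
                       exact (strict_incr_of_deriv_pos 0 p p' Hd Hpos)).
  lra.
Qed.

Lemma strictly_convex_of_deriv_strict_incr (a : R) (g g' : R -> R) :
  (forall x, a < x -> derivable_pt_lim g x (g' x)) ->
  (forall x y, a < x -> x < y -> g' x < g' y) ->
  strictly_convex_on (fun u => a < u) g.
Proof.
  intros Hd Hincr.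
  assert (Hlt : forall x y t, a < x -> x < y -> 0 < t < 1 ->
            g (t * x + (1 - t) * y) < t * g x + (1 - t) * g y).
  { intros x y t Hx Hxy Ht.
    set (z := t * x + (1 - t) * y).
    assert (Hxz : x < z) by (unfold z; nra).
    assert (Hzy : z < y) by (unfold z; nra).
    destruct (MVT_cor2 g g' x z Hxz) as [c1 [E1 Hc1]]. { intros c Hc; apply Hd; lra. }
    destruct (MVT_cor2 g g' z y Hzy) as [c2 [E2 Hc2]]. { intros c Hc; apply Hd; lra. }
    replace (z - x) with ((1 - t) * (y - x)) in E1 by (unfold z; ring).
    replace (y - z) with (t * (y - x)) in E2 by (unfold z; ring).
    assert (0 < t * (1 - t) * (y - x)) by (apply Rmult_lt_0_compat; nra).
    assert (0 < t * (1 - t) * (y - x) * (g' c2 - g' c1))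
      by (apply Rmult_lt_0_compat; [| assert (g' c1 < g' c2) by (apply Hincr; lra)]; lra).
    nra. }
  intros x y t Hx Hy Hxy Ht.
  destruct (Rlt_or_le x y) as [Hxy' | Hyx].
  - now apply Hlt.
  - replace (t * x + (1 - t) * y) with ((1 - t) * y + (1 - (1 - t)) * x) by ring.
    replace (t * g x + (1 - t) * g y) with ((1 - t) * g y + (1 - (1 - t)) * g x) by ring.
    apply Hlt; lra.
Qed.

Lemma right_lim_quadratic_comb (a b c : R -> R) (kb kc : R) :
  filterlim a (at_right 0) (locally (a 0)) -> filterlim b (at_right 0) (locally (b 0)) ->
  filterlim c (at_right 0) (locally (c 0)) ->
  filterlim (fun u => u ^ 2 * a u - kb * u * b u + kc * c u) (at_right 0)
    (locally (kc * c 0)).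
Proof.
  intros Ha Hb Hc.
  replace (kc * c 0) with (0 ^ 2 * a 0 + - kb * 0 * b 0 + kc * c 0) by ring.
  apply (filterlim_ext (fun u => u ^ 2 * a u + - kb * u * b u + kc * c u)); [intros u; ring |].
  pose proof (filterlim_id_at_right 0).
  repeat first [ apply (filterlim_Rplus (at_right 0)) | apply (filterlim_Rmult (at_right 0))
               | apply filterlim_const | assumption ].
Qed.

Section SquareQuotient.

Variables f f1 f2 f3 f4 : R -> R.
Hypotheses (H1 : has_deriv_nonneg f f1) (H2 : has_deriv_nonneg f1 f2)
  (H3 : has_deriv_nonneg f2 f3) (H4 : has_deriv_nonneg f3 f4).
Hypotheses (Hf0 : 0 <= f 0) (Hf10 : 0 <= f1 0) (Hf4 : forall u, 0 < u -> 0 < f4 u).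

Definition sq_quot_deriv (u : R) : R := f1 u / u ^ 2 - 2 * f u / u ^ 3.
Definition sq_quot_d2_num (u : R) : R := u ^ 2 * f2 u - 4 * u * f1 u + 6 * f u.
Definition sq_quot_d2_num_deriv (u : R) : R := u ^ 2 * f3 u - 2 * u * f2 u + 2 * f1 u.

Lemma derivable_pt_lim_sq_quot (x : R) :
  0 < x -> derivable_pt_lim (fun u => f u / u ^ 2) x (sq_quot_deriv x).
Proof.
  intros Hx; apply is_derive_Reals; unfold sq_quot_deriv.
  pose proof (has_deriv_nonneg_is_derive f f1 x H1 Hx) as D.
  auto_derive.
  - assert (x ^ 2 <> 0) by (apply pow_nonzero; lra).
    repeat split; try (eexists; eassumption); assumption.
  - rewrite (is_derive_unique (fun y : R => f y) x _ D). field; lra.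
Qed.

Lemma derivable_pt_lim_sq_quot_deriv (x : R) :
  0 < x -> derivable_pt_lim sq_quot_deriv x (sq_quot_d2_num x / x ^ 4).
Proof.
  intros Hx; apply is_derive_Reals; unfold sq_quot_deriv, sq_quot_d2_num.
  pose proof (has_deriv_nonneg_is_derive f f1 x H1 Hx) as D0.
  pose proof (has_deriv_nonneg_is_derive f1 f2 x H2 Hx) as D1.
  auto_derive.
  - assert (x ^ 2 <> 0 /\ x ^ 3 <> 0) as [] by (split; apply pow_nonzero; lra).
    repeat split; try (eexists; eassumption); assumption.
  - rewrite (is_derive_unique (fun y : R => f y) x _ D0),
      (is_derive_unique (fun y : R => f1 y) x _ D1).
    field; lra.
Qed.

Lemma derivable_pt_lim_sq_quot_d2_num (x : R) :
  0 < x -> derivable_pt_lim sq_quot_d2_num x (sq_quot_d2_num_deriv x).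
Proof.
  intros Hx; apply is_derive_Reals; unfold sq_quot_d2_num, sq_quot_d2_num_deriv.
  pose proof (has_deriv_nonneg_is_derive f f1 x H1 Hx) as D0.
  pose proof (has_deriv_nonneg_is_derive f1 f2 x H2 Hx) as D1.
  pose proof (has_deriv_nonneg_is_derive f2 f3 x H3 Hx) as D2.
  auto_derive.
  - repeat split; eexists; eassumption.
  - rewrite (is_derive_unique (fun y : R => f y) x _ D0),
      (is_derive_unique (fun y : R => f1 y) x _ D1),
      (is_derive_unique (fun y : R => f2 y) x _ D2).
    ring.
Qed.

Lemma derivable_pt_lim_sq_quot_d2_num_deriv (x : R) :
  0 < x -> derivable_pt_lim sq_quot_d2_num_deriv x (x ^ 2 * f4 x).
Proof.
  intros Hx; apply is_derive_Reals; unfold sq_quot_d2_num_deriv.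
  pose proof (has_deriv_nonneg_is_derive f1 f2 x H2 Hx) as D1.
  pose proof (has_deriv_nonneg_is_derive f2 f3 x H3 Hx) as D2.
  pose proof (has_deriv_nonneg_is_derive f3 f4 x H4 Hx) as D3.
  auto_derive.
  - repeat split; eexists; eassumption.
  - rewrite (is_derive_unique (fun y : R => f1 y) x _ D1),
      (is_derive_unique (fun y : R => f2 y) x _ D2),
      (is_derive_unique (fun y : R => f3 y) x _ D3).
    ring.
Qed.

Lemma sq_quot_d2_num_deriv_pos (x : R) : 0 < x -> 0 < sq_quot_d2_num_deriv x.
Proof.
  apply (pos_of_right_lim_deriv_pos (2 * f1 0) _ (fun u => u ^ 2 * f4 u)).
  - apply right_lim_quadratic_comb; eapply has_deriv_nonneg_right_cont; eassumption.
  - lra.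
  - exact derivable_pt_lim_sq_quot_d2_num_deriv.
  - intros u Hu; apply Rmult_lt_0_compat; [apply pow_lt |]; auto.
Qed.

Lemma sq_quot_d2_num_pos (x : R) : 0 < x -> 0 < sq_quot_d2_num x.
Proof.
  apply (pos_of_right_lim_deriv_pos (6 * f 0) _ sq_quot_d2_num_deriv).
  - apply right_lim_quadratic_comb; eapply has_deriv_nonneg_right_cont; eassumption.
  - lra.
  - exact derivable_pt_lim_sq_quot_d2_num.
  - exact sq_quot_d2_num_deriv_pos.
Qed.

End SquareQuotient.

Theorem lemma5 (f f1 f2 f3 f4 : R -> R)
  (H1 : has_deriv_nonneg f f1) (H2 : has_deriv_nonneg f1 f2)
  (H3 : has_deriv_nonneg f2 f3) (H4 : has_deriv_nonneg f3 f4)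
  (Hf0 : 0 <= f 0) (Hf10 : 0 <= f1 0)
  (Hf4 : forall u, 0 < u -> 0 < f4 u) :
  strictly_convex_on (fun u => 0 < u) (fun u => f u / u ^ 2).
Proof.
  apply (strictly_convex_of_deriv_strict_incr 0 _ (sq_quot_deriv f f1)).
  - exact (derivable_pt_lim_sq_quot f f1 H1).
  - apply (strict_incr_of_deriv_pos 0 _ (fun u => sq_quot_d2_num f f1 f2 u / u ^ 4)).
    + exact (derivable_pt_lim_sq_quot_deriv f f1 f2 H1 H2).
    + intros u Hu; apply Rdiv_lt_0_compat; [| apply pow_lt; exact Hu].
      exact (sq_quot_d2_num_pos f f1 f2 f3 f4 H1 H2 H3 H4 Hf0 Hf10 Hf4 u Hu).
Qed.
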